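(* Let $N\ge 2$ and $R\ge 3$, and let $S=\lfloor R/3\rfloor$. For every $c<2-\tfrac{1}{2^S}$, there is no $c$-approximation randomized online algorithm for the minimum congestion routing problem in the Clos network $C_{N,R}$.
   Context: Clos network $C_{N,R}$: a directed graph with $N$ middle switches $M_1,\dots,M_N$, $R$ input switches $I_1,\dots,I_R$, $R$ output switches $O_1,\dots,O_R$, source servers $s_i^k$ and destination servers $t_i^k$ ($i\in[R]$, $k\in[N]$), and edges $s_i^kI_i$, $I_iM_m$, $M_mO_i$, $O_it_i^k$ for all $i\in[R]$, $m,k\in[N]$; all links have capacity $1$. A flow $f$ has a source server $s(f)$ of input switch $I_{i(f)}$, a destination server $t(f)$ of output switch $O_{j(f)}$, and a positive demand $\mathrm{dem}(f)$; a set of flows must have total demand at most $1$ leaving each source server and entering each destination server. A routing $r$ assigns each flow a single middle switch $r(f)\in[N]$; its congestion is $\max_{i\in[R],m\in[N]}\max\{\sum_{f:i(f)=i,r(f)=m}\mathrm{dem}(f),\ \sum_{f:j(f)=i,r(f)=m}\mathrm{dem}(f)\}$; $OPT(\mathcal{F})$ is the minimum congestion over all routings of $\mathcal{F}$. A deterministic online algorithm defines a routing for every sequence of flows such that for every prefix $P$ of a sequence $F$, the routing of $P$ when given $P$ equals the routing of $P$ when given $F$. A randomized online algorithm is a probability distribution over deterministic online algorithms; it is a $c$-approximation if for every sequence $\mathcal{F}$ of flows its expected congestion is at most $c\cdot OPT(\mathcal{F})$. *)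

From HB Require Import structures.
From mathcomp Require Import all_boot all_order all_algebra.
From mathcomp Require Import all_classical all_reals all_analysis.
Set Implicit Arguments. Unset Strict Implicit. Unset Printing Implicit Defensive.
Import Order.TTheory GRing.Theory Num.Theory.
Local Open Scope ring_scope.

(* A flow in the Clos network C_{N,R}: source server s_{src_in}^{src_k}
   (of input switch I_{src_in}), destination server t_{dst_out}^{dst_k}
   (of output switch O_{dst_out}) and a demand. *)
Record flow (Rt : realType) (N R : nat) := Flow {
  src_in : 'I_R; src_k : 'I_N; dst_out : 'I_R; dst_k : 'I_N; dem : Rt }.

Section Clos.
Variables (Rt : realType) (N R : nat).
Local Notation flowT := (flow Rt N R).

Definition valid_flows (F : seq flowT) : Prop :=
  (forall f, f \in map (@dem _ _ _) F -> 0 < f) /\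
  (forall (i : 'I_R) (k : 'I_N),
     \sum_(f <- F | (src_in f == i) && (src_k f == k)) dem f <= 1) /\
  (forall (j : 'I_R) (k : 'I_N),
     \sum_(f <- F | (dst_out f == j) && (dst_k f == k)) dem f <= 1).

(* congestion of routing r (r`_t = middle switch of the t-th flow of F) *)
Definition congestion (F : seq flowT) (r : seq 'I_N) : Rt :=
  \big[Num.max/0]_(i < R) \big[Num.max/0]_(m < N)
    Num.max (\sum_(p <- zip F r | (src_in p.1 == i) && (p.2 == m)) dem p.1)
            (\sum_(p <- zip F r | (dst_out p.1 == i) && (p.2 == m)) dem p.1).

(* OPT(F): minimum congestion over all routings of F (in \bar Rt; +oo only
   if there is no routing at all) *)
Definition OPT (F : seq flowT) : \bar Rt :=
  \big[Order.min/+oo%E]_(r : (size F).-tuple 'I_N) (congestion F r)%:E.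

Definition det_online (A : seq flowT -> seq 'I_N) : Prop :=
  (forall F, size (A F) = size F) /\
  (forall F n, A (take n F) = take n (A F)).

(* randomized online c-approximation algorithm: a probability distribution over
   deterministic online algorithms, i.e. a random deterministic online algorithm
   on some probability space, whose routing of each sequence is measurable *)
Definition rand_c_approx (c : Rt) : Prop :=
  exists (d : measure_display) (T : measurableType d) (P : probability T Rt)
         (alg : T -> seq flowT -> seq 'I_N),
    (forall w, det_online (alg w)) /\
    (forall F s, measurable [set w | alg w F = s]) /\
    (forall F, valid_flows F ->
       (\int[P]_w (congestion F (alg w F))%:E <= c%:E * OPT F)%E).

End Clos.

(* Split the input and output switches into S = R/3 disjoint triples. On the
   k-th triple a gadget sends N-1 flows X from input to output switch 3k and
   N-1 flows Y from input to output switch 3k+1, and then either one flow Z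
   from input 3k to output 3k+1, or two flows W, V from input 3k+2 to outputs
   3k and 3k+1.  With all demands equal to a unit dl, a routing has congestion
   dl when no two flows share a link and at least 2 dl otherwise.  After the
   X and Y copies are routed without conflict, one middle switch is free on
   each side; Z needs the two free switches to coincide, W and V need them to
   differ, so an online algorithm routes at most one of the 2^S instances
   (one continuation per gadget) without conflict, although each of them has
   a conflict-free routing.  Averaging over these instances (Yao's principle)
   gives expected congestion at least (2 - 2^-S) dl against OPT = dl. *)

From HB Require Import structures.
From mathcomp Require Import all_boot all_order all_algebra.
From mathcomp Require Import all_classical all_reals all_analysis.
From mathcomp Require Import measurable_realfun.
From mathcomp Require Import zify lra.
Import Order.TTheory GRing.Theory Num.Theory.
Set Implicit Arguments. Unset Strict Implicit. Unset Printing Implicit Defensive.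
Local Open Scope ring_scope.

Lemma all_zip1 (S T : Type) (P : pred S) (s : seq S) (t : seq T) :
  (size s <= size t)%N -> all (fun p => P p.1) (zip s t) = all P s.
Proof. by move=> st; rewrite -[in RHS](unzip1_zip st) all_map. Qed.

Lemma sum_uniform (V : nmodType) (I : Type) (s : seq I) (g : I -> V) (P : pred I) x :
  all (fun i => g i == x) s -> \sum_(i <- s | P i) g i = x *+ count P s.
Proof.
elim: s => [|i s IH] /=; first by rewrite big_nil.
by case/andP=> /eqP gi /IH{}IH; rewrite big_cons IH gi; case: (P i); rewrite ?mulrS.
Qed.

Definition flow_code (Rt : realType) N R (f : flow Rt N R) :=
  (src_in f, src_k f, dst_out f, dst_k f, dem f).

Definition flow_decode (Rt : realType) N R
    (c : 'I_R * 'I_N * 'I_R * 'I_N * Rt) : flow Rt N R :=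
  Flow c.1.1.1.1 c.1.1.1.2 c.1.1.2 c.1.2 c.2.

Lemma flow_codeK (Rt : realType) N R : cancel (@flow_code Rt N R) (@flow_decode Rt N R).
Proof. by case. Qed.

HB.instance Definition _ (Rt : realType) N R :=
  Equality.copy (flow Rt N R) (can_type (@flow_codeK Rt N R)).

Section Routings.
Variables (Rt : realType) (N R : nat).
Local Notation flowT := (flow Rt N R).
Local Notation routedT := (flowT * 'I_N)%type.
Local Notation src := (@src_in Rt N R).
Local Notation dst := (@dst_out Rt N R).
Implicit Types (sw : flowT -> 'I_R) (F : seq flowT) (r : seq 'I_N) (L : seq routedT).

Definition load (sw : flowT -> 'I_R) (L : seq routedT) (i : 'I_R) (m : 'I_N) :=
  count (fun p : routedT => (sw p.1 == i) && (p.2 == m)) L.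

Lemma load_cat sw L1 L2 i m :
  load sw (L1 ++ L2) i m = (load sw L1 i m + load sw L2 i m)%N.
Proof. exact: count_cat. Qed.

Lemma load_zip_nseq sw n (f : flowT) (t : seq 'I_N) i m : size t = n ->
  load sw (zip (nseq n f) t) i m = ((sw f == i) * count_mem m t)%N.
Proof.
move=> <-; elim: t => [|x t IH]; first by rewrite muln0.
by rewrite /load /= in IH *; rewrite IH; case: (sw f == i); rewrite ?mul1n ?mul0n.
Qed.

Definition link_free (sw : flowT -> 'I_R) (L : seq routedT) :=
  [forall i, forall m, load sw L i m <= 1]%N.

Definition conflict_free (L : seq routedT) :=
  link_free src L && link_free dst L.

Lemma link_freeP sw L : reflect (forall i m, load sw L i m <= 1)%N (link_free sw L).
Proof.
apply: (iffP forallP) => [H i m | H i]; first exact: (forallP (H i)).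
by apply/forallP.
Qed.

Lemma link_free_subseq sw L1 L2 : subseq L1 L2 -> link_free sw L2 -> link_free sw L1.
Proof.
move=> sub /link_freeP free; apply/link_freeP => i m.
exact: leq_trans (leq_count_subseq _ sub) (free i m).
Qed.

Lemma conflict_free_subseq L1 L2 :
  subseq L1 L2 -> conflict_free L2 -> conflict_free L1.
Proof. by move=> sub /andP[*]; rewrite /conflict_free !(link_free_subseq sub). Qed.

Lemma link_free_uniq sw L L' i : link_free sw L -> subseq L' L ->
  all (fun p : routedT => sw p.1 == i) L' -> uniq (map snd L').
Proof.
move=> free sub /allP on_i; move: free => /(link_free_subseq sub) /link_freeP free.
apply: count_mem_uniq => m.
have cnt : count_mem m (map snd L') = load sw L' i m.
  by rewrite count_map; apply: eq_in_count => p /on_i /= ->.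
by have := free i m; rewrite -cnt -has_pred1 has_count; lia.
Qed.

Lemma link_free_uniq_zip_nseq sw L n (f g : flowT) (t : seq 'I_N) x : size t = n ->
  link_free sw L -> subseq (rcons (zip (nseq n f) t) (g, x)) L -> sw g = sw f ->
  uniq (x :: t).
Proof.
move=> size_t free sub gf.
have zip_t : map snd (zip (nseq n f) t) = t by apply: unzip2_zip; rewrite size_nseq size_t.
suff : uniq (map snd (rcons (zip (nseq n f) t) (g, x))) by rewrite map_rcons zip_t rcons_uniq.
apply: (link_free_uniq (i := sw f) free sub).
rewrite all_rcons gf eqxx (all_zip1 (fun y => sw y == sw f)) ?size_nseq ?size_t //.
by rewrite all_nseq eqxx orbT.
Qed.

Definition uniform_dem (dl : Rt) F := all (fun f => dem f == dl) F.

Lemma uniform_zip dl F r :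
  uniform_dem dl F -> all (fun p : routedT => dem p.1 == dl) (zip F r).
Proof. by elim: F r => [|f F IH] [|m r] //= /andP[-> /IH ->]. Qed.

Lemma congestion_uniform dl F r : uniform_dem dl F ->
  congestion F r = \big[Num.max/0]_(i < R) \big[Num.max/0]_(m < N)
    Num.max (dl *+ load src (zip F r) i m) (dl *+ load dst (zip F r) i m).
Proof.
move=> /(uniform_zip r) unif; apply: eq_bigr => i _; apply: eq_bigr => m _.
by rewrite !(sum_uniform _ unif).
Qed.

Lemma congestion_ge0 F r : 0 <= congestion F r.
Proof. exact: bigmax_ge_id. Qed.

Lemma load_le_congestion dl F r i m x : uniform_dem dl F ->
  x <= Num.max (dl *+ load src (zip F r) i m) (dl *+ load dst (zip F r) i m) ->
  x <= congestion F r.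
Proof.
move=> unif le_x; rewrite (congestion_uniform r unif).
apply: le_trans (le_bigmax _ _ i); exact: le_trans le_x (le_bigmax _ _ m).
Qed.

Lemma congestion_conflict_free dl F r : 0 <= dl -> uniform_dem dl F ->
  conflict_free (zip F r) -> congestion F r <= dl.
Proof.
move=> dl0 unif /andP[/link_freeP src_free /link_freeP dst_free].
rewrite (congestion_uniform r unif); apply: bigmax_le => // i _.
apply: bigmax_le => // m _.
by rewrite ge_max -{2 4}[dl]mulr1n !ler_wpMn2l.
Qed.

Lemma congestion_conflict dl F r : 0 <= dl -> uniform_dem dl F ->
  ~~ conflict_free (zip F r) -> dl *+ 2 <= congestion F r.
Proof.
move=> dl0 unif; rewrite negb_and => /orP[] /forallPn[i /forallPn[m]];
  rewrite -ltnNge => two_le; apply: (load_le_congestion (i := i) (m := m) unif);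
  by rewrite le_max (ler_wpMn2l dl0 two_le) ?orbT.
Qed.

Lemma congestion_ge_dem dl F r : 0 <= dl -> uniform_dem dl F ->
  size r = size F -> F != [::] -> dl <= congestion F r.
Proof.
case: F r => [|f F] [|m r] // dl0 unif _ _.
apply: (load_le_congestion (i := src f) (m := m) unif).
by rewrite le_max /load /= !eqxx -{1}[dl]mulr1n ler_wpMn2l.
Qed.

Lemma OPT_ge0 F : (0 <= OPT F)%E.
Proof. by apply: le_bigmin => // r _; rewrite lee_fin congestion_ge0. Qed.

Lemma OPT_le_congestion F r : size r = size F -> (OPT F <= (congestion F r)%:E)%E.
Proof. by move=> /eqP sr; rewrite /OPT; apply: (bigmin_le _ (Tuple sr)). Qed.

Lemma valid_flows_uniform dl F : 0 < dl -> uniform_dem dl F ->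
  dl *+ size F <= 1 -> valid_flows F.
Proof.
move=> dl0 unif size_le; have le1 P : \sum_(f <- F | P f) dem f <= 1.
  by rewrite (sum_uniform _ unif); apply: le_trans size_le; rewrite ler_wpMn2l ?ltW ?count_size.
split; last by split=> *; apply: le1.
by move=> x /mapP[f /(allP unif)/eqP df ->]; rewrite df.
Qed.

End Routings.

Section Online.
Variables (Rt : realType) (N R : nat).
Local Notation flowT := (flow Rt N R).
Implicit Types (A : seq flowT -> seq 'I_N) (P F : seq flowT).

Definition routed A F := zip F (A F).

Lemma det_online_cat A P F : det_online A ->
  exists2 r, size r = size F & A (P ++ F) = A P ++ r.
Proof.
move=> [size_A take_A]; exists (drop (size P) (A (P ++ F))).
  by rewrite size_drop size_A size_cat addKn.
by rewrite -{2}(take_size_cat F (erefl (size P))) take_A cat_take_drop.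
Qed.

Lemma conflict_free_prefix A P F : det_online A ->
  conflict_free (routed A (P ++ F)) -> conflict_free (routed A P).
Proof.
move=> online; have [r _ eA] := det_online_cat P F online.
rewrite /routed eA zip_cat ?online.1 //; apply: conflict_free_subseq; exact: prefix_subseq.
Qed.

End Online.

Lemma missing_ord_eq n (r : seq 'I_n) x y :
  size r = n.-1 -> uniq (x :: r) -> uniq (y :: r) -> x = y.
Proof.
move=> size_r /andP[xr ur] /andP[yr _]; apply/eqP/negPn/negP => xy.
have uxyr : uniq [:: x, y & r] by rewrite /= inE negb_or xy xr yr.
have := uniq_leq_size uxyr (fun z _ => mem_enum 'I_n z).
rewrite size_enum_ord /= size_r.
by have := ltn_ord x; lia.
Qed.

Lemma sum_ge_all_but_one (K : numDomainType) (J : finType) (x : J -> K) (j0 : J) a :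
  (forall j, a <= x j) -> (forall j, j != j0 -> a *+ 2 <= x j) ->
  a *+ (#|J|.*2.-1) <= \sum_j x j.
Proof.
move=> ge_a ge_2a; rewrite (bigD1 j0) //=.
have : a *+ 2 *+ #|predC1 j0| <= \sum_(j | j != j0) x j.
  by rewrite -sumr_const; apply: ler_sum.
rewrite cardC1 -mulrnA => sum_ge; apply: le_trans (lerD (ge_a j0) sum_ge).
have J_gt0 : (0 < #|J|)%N by apply/card_gt0P; exists j0.
by rewrite -mulrS; have -> : (#|J|.*2.-1 = (2 * #|J|.-1).+1)%N by lia.
Qed.

Section Gadgets.
Variables (Rt : realType) (N R : nat) (i0 : 'I_R) (m0 : 'I_N) (dl : Rt).
Local Notation flowT := (flow Rt N R).
Local Notation src := (@src_in Rt N R).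
Local Notation dst := (@dst_out Rt N R).

(* Out-of-range indices give the junk values [i0] and [m0]. *)
Definition switch n : 'I_R := insubd i0 n.
Definition middle n : 'I_N := insubd m0 n.
Definition unit_flow a b : flowT := Flow (switch a) m0 (switch b) m0 dl.

Definition flowX k := unit_flow (3 * k) (3 * k).
Definition flowY k := unit_flow (3 * k).+1 (3 * k).+1.
Definition flowZ k := unit_flow (3 * k) (3 * k).+1.
Definition flowW k := unit_flow (3 * k).+2 (3 * k).
Definition flowV k := unit_flow (3 * k).+2 (3 * k).+1.

Definition gadget_tail k (b : bool) :=
  if b then [:: flowZ k] else [:: flowW k; flowV k].

Definition gadget k b :=
  nseq N.-1 (flowX k) ++ nseq N.-1 (flowY k) ++ gadget_tail k b.

Fixpoint instance k (bs : seq bool) : seq flowT :=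
  if bs is b :: bs' then gadget k b ++ instance k.+1 bs' else [::].

Lemma gadget_not_both A Q k : det_online A ->
  conflict_free (routed A (Q ++ gadget k true)) ->
  conflict_free (routed A (Q ++ gadget k false)) -> False.
Proof.
move=> online; set X := nseq N.-1 (flowX k); set Y := nseq N.-1 (flowY k).
have [rX size_rX eX] := det_online_cat Q X online.
have [rY size_rY eY] := det_online_cat (Q ++ X) Y online.
have routed_gadget b : exists2 s, size s = size (gadget_tail k b) &
    routed A (Q ++ gadget k b) = zip Q (A Q) ++ zip X rX ++ zip Y rY ++ zip (gadget_tail k b) s.
  have [s size_s es] := det_online_cat ((Q ++ X) ++ Y) (gadget_tail k b) online.
  exists s => //; rewrite /routed /gadget -/X -/Y !catA es eY eX -!catA.
  by rewrite !zip_cat ?online.1.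
have [[|z [|]] //= _ ->] := routed_gadget true.
have [[|w [|v [|]]] //= _ ->] := routed_gadget false.
rewrite size_nseq in size_rX; rewrite size_nseq in size_rY.
move=> /andP[src_true dst_true] /andP[src_false dst_false].
have z_rX : uniq (z :: rX).
  apply: (link_free_uniq_zip_nseq (f := flowX k) (g := flowZ k) size_rX src_true) => //.
  rewrite -cats1; apply: subseq_trans (suffix_subseq _ _).
  exact: cat_subseq (subseq_refl _) (suffix_subseq _ _).
have z_rY : uniq (z :: rY).
  apply: (link_free_uniq_zip_nseq (f := flowY k) (g := flowZ k) size_rY dst_true) => //.
  by rewrite -cats1; apply: subseq_trans (suffix_subseq _ _); apply: suffix_subseq.
have w_rX : uniq (w :: rX).
  apply: (link_free_uniq_zip_nseq (f := flowX k) (g := flowW k) size_rX dst_false) => //.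
  rewrite -cats1; apply: subseq_trans (suffix_subseq _ _); apply: cat_subseq (subseq_refl _) _.
  by rewrite sub1seq mem_cat !inE eqxx orbT.
have v_rY : uniq (v :: rY).
  apply: (link_free_uniq_zip_nseq (f := flowY k) (g := flowV k) size_rY dst_false) => //.
  rewrite -cats1; do 2 apply: subseq_trans (suffix_subseq _ _).
  by apply: cat_subseq (subseq_refl _) _; rewrite sub1seq !inE eqxx orbT.
have /andP[] : uniq [:: v; w].
  apply: (link_free_uniq_zip_nseq (n := 1) (f := flowW k) (g := flowV k) _ src_false) => //.
  by do 3 apply: subseq_trans (suffix_subseq _ _).
rewrite inE => /eqP + _; apply.
by rewrite -(missing_ord_eq size_rX z_rX w_rX) (missing_ord_eq size_rY z_rY v_rY).
Qed.

Lemma instance_conflict_free_inj A Q k bs1 bs2 : det_online A -> size bs1 = size bs2 ->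
  conflict_free (routed A (Q ++ instance k bs1)) ->
  conflict_free (routed A (Q ++ instance k bs2)) -> bs1 = bs2.
Proof.
move=> online; elim: bs1 bs2 k Q => [|b1 bs1 IH] [|b2 bs2] k Q //= [size_bs].
rewrite (catA Q (gadget k b1)) (catA Q (gadget k b2)) => free1 free2.
have b12 : b1 = b2.
  have gadget1 := conflict_free_prefix online free1.
  have gadget2 := conflict_free_prefix online free2.
  case: b1 b2 gadget1 gadget2 {free1 free2} => [] [] // g1 g2.
    by case: (gadget_not_both online g1 g2).
  by case: (gadget_not_both online g2 g1).
by subst b2; rewrite (IH bs2 k.+1 _ size_bs free1 free2).
Qed.

Lemma instance_neq_nil k bs : bs != [::] -> instance k bs != [::].
Proof.
case: bs => [|b bs] // _; rewrite -size_eq0 /= /gadget !size_cat.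
by case: b; rewrite /=; lia.
Qed.

Lemma uniform_instance k bs : uniform_dem dl (instance k bs).
Proof.
elim: bs k => //= b bs IH k.
have := IH k.+1; rewrite /uniform_dem all_cat => ->.
by rewrite andbT !all_cat !all_nseq /=; case: b; rewrite /= eqxx ?orbT.
Qed.

Lemma size_instance k bs : (size (instance k bs) <= N.+1.*2 * size bs)%N.
Proof.
elim: bs k => //= b bs IH k; have := IH k.+1.
by rewrite /gadget !size_cat !size_nseq; case: b => /=; lia.
Qed.

Lemma valid_instance k bs : 0 < dl -> dl *+ (N.+1.*2 * size bs) <= 1 ->
  valid_flows (instance k bs).
Proof.
move=> dl_gt0 le1; apply: (valid_flows_uniform dl_gt0 (uniform_instance k bs)).
exact: le_trans (ler_wpMn2l (ltW dl_gt0) (size_instance k bs)) le1.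
Qed.

Lemma sum_congestion_instances_ge A n : det_online A -> 0 <= dl -> (0 < n)%N ->
  dl *+ (2 ^ n).*2.-1 <=
  \sum_(bs : n.-tuple bool) congestion (instance 0 bs) (A (instance 0 bs)).
Proof.
move=> online dl0 n_gt0.
pose j0 := odflt (nseq_tuple n false)
  [pick bs : n.-tuple bool | conflict_free (routed A (instance 0 bs))].
have := sum_ge_all_but_one (j0 := j0)
  (x := fun bs : n.-tuple bool => congestion (instance 0 bs) (A (instance 0 bs))).
rewrite card_tuple card_bool; apply=> bs.
  apply: congestion_ge_dem dl0 (uniform_instance 0 bs) (online.1 _) _.
  by apply: instance_neq_nil; rewrite -size_eq0 size_tuple -lt0n.
move=> ne_j0; apply: congestion_conflict dl0 (uniform_instance 0 bs) _.
apply/negP => free_bs; move/eqP: ne_j0; apply; rewrite /j0.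
case: pickP => [bs' free_bs' | /(_ bs)]; last by rewrite free_bs.
apply: val_inj; apply: (instance_conflict_free_inj (Q := [::]) online _ free_bs free_bs').
by rewrite !size_tuple.
Qed.

(* Both continuations find the middle switch N-1 free at the switches they
   share with X and Y; for W, V the Y copies are shifted up to free middle 0. *)
Definition gadget_routing (b : bool) : seq 'I_N :=
  map middle (iota 0 N.-1) ++ map middle (iota (~~ b) N.-1) ++
  (if b then [:: middle N.-1] else [:: middle N.-1; middle 0]).

Fixpoint opt_routing (bs : seq bool) : seq 'I_N :=
  if bs is b :: bs' then gadget_routing b ++ opt_routing bs' else [::].

Lemma size_gadget_routing k b : size (gadget_routing b) = size (gadget k b).
Proof. by rewrite !size_cat !size_map !size_nseq !size_iota; case: b. Qed.

Lemma size_opt_routing k bs : size (opt_routing bs) = size (instance k bs).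
Proof.
elim: bs k => //= b bs IH k.
by rewrite [LHS]size_cat [RHS]size_cat (size_gadget_routing k) (IH k.+1).
Qed.

Lemma switch_eq n i : (n < R)%N -> (switch n == i) = (n == i :> nat).
Proof. by move=> lt_nR; rewrite -val_eqE val_insubd lt_nR. Qed.

Lemma middle_eq j m : (j < N)%N -> (middle j == m) = (j == m :> nat).
Proof. by move=> lt_jN; rewrite -val_eqE val_insubd lt_jN. Qed.

Lemma count_middle_iota s n (m : 'I_N) : (s + n <= N)%N ->
  count_mem m (map middle (iota s n)) = (s <= m < s + n)%N.
Proof.
move=> le_N; rewrite count_map (@eq_in_count _ _ (pred1 (m : nat))).
  by rewrite count_uniq_mem ?iota_uniq // mem_iota.
by move=> j; rewrite mem_iota => /andP[_ lt_j] /=; rewrite middle_eq //; lia.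
Qed.

Lemma load_gadget_routing sw k b i m : sw = src \/ sw = dst ->
  ((3 * k).+2 < R)%N -> (1 < N)%N ->
  (load sw (zip (gadget k b) (gadget_routing b)) i m <= (3 * k <= i < (3 * k).+3))%N.
Proof.
move=> side lt_R lt_N; rewrite /gadget /gadget_routing.
rewrite !zip_cat ?size_map ?size_iota ?size_nseq // !load_cat.
rewrite !load_zip_nseq ?size_map ?size_iota //.
case: b; rewrite !count_middle_iota /=; try lia;
  by case: side => ->; rewrite /load /= !switch_eq ?middle_eq //=; lia.
Qed.

Lemma load_opt_routing sw k bs i m : sw = src \/ sw = dst ->
  (3 * (k + size bs) <= R)%N -> (1 < N)%N ->
  (load sw (zip (instance k bs) (opt_routing bs)) i m <=
   (3 * k <= i < 3 * (k + size bs)))%N.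
Proof.
move=> side; elim: bs k => [|b bs IH] k /= le_R lt_N; first by rewrite /load.
rewrite (zip_cat (s1 := gadget k b)) ?(size_gadget_routing k) // load_cat.
have := IH k.+1 ltac:(lia) lt_N.
by have := load_gadget_routing (k := k) b i m side ltac:(lia) lt_N; lia.
Qed.

Lemma conflict_free_opt_routing bs : (3 * size bs <= R)%N -> (1 < N)%N ->
  conflict_free (zip (instance 0 bs) (opt_routing bs)).
Proof.
move=> le_R lt_N; apply/andP; split; apply/link_freeP => i m.
  exact: leq_trans (load_opt_routing (k := 0) i m (or_introl erefl) le_R lt_N) (leq_b1 _).
exact: leq_trans (load_opt_routing (k := 0) i m (or_intror erefl) le_R lt_N) (leq_b1 _).
Qed.

Lemma OPT_instance_le bs : 0 <= dl -> (3 * size bs <= R)%N -> (1 < N)%N ->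
  (OPT (instance 0 bs) <= dl%:E)%E.
Proof.
move=> dl0 le_R lt_N; apply: le_trans (OPT_le_congestion (size_opt_routing 0 bs)) _.
rewrite lee_fin (congestion_conflict_free dl0 (uniform_instance 0 bs)) //.
exact: conflict_free_opt_routing.
Qed.

End Gadgets.

Local Open Scope classical_set_scope.

Lemma measurable_fun_countable_fibers d (T : measurableType d) (U : countType)
    d' (V : measurableType d') (g : T -> U) (h : U -> V) :
  (forall u, measurable [set w | g w = u]) -> measurable_fun setT (h \o g).
Proof.
move=> meas_fiber _ B _; rewrite setTI.
have -> : (h \o g) @^-1` B = \bigcup_(u : U) ([set w | g w = u] `&` [set _ | B (h u)]).
  by apply/seteqP; split => [w /= Bw | w [u _ [/= <-]]] //; exists (g w).
apply: countable_bigcupT_measurable; first exact: countableP.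
move=> u; apply: measurableI; first exact: meas_fiber.
by case: (pselect (B (h u))) => Bhu;
  [rewrite (_ : [set _ | _] = setT) | rewrite (_ : [set _ | _] = set0)]; rewrite // predeqE.
Qed.

Local Close Scope classical_set_scope.

Section Yao.
Variables (Rt : realType) (N R : nat).
Local Notation flowT := (flow Rt N R).

Lemma rand_c_approx_max c :
  @rand_c_approx Rt N R c -> @rand_c_approx Rt N R (Num.max c 0).
Proof.
move=> [d [T [P [alg [online [meas approx]]]]]].
exists d, T, P, alg; split=> //; split=> // F validF.
apply: le_trans (approx F validF) _; apply: lee_wpmul2r; first exact: OPT_ge0.
by rewrite lee_fin le_max lexx.
Qed.

Lemma yao_principle (c opt lb : Rt) (J : finType) (inst : J -> seq flowT) :
  0 <= c -> 0 <= lb -> @rand_c_approx Rt N R c ->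
  (forall j, valid_flows (inst j)) -> (forall j, (OPT (inst j) <= opt%:E)%E) ->
  (forall A, det_online A -> lb <= \sum_j congestion (inst j) (A (inst j))) ->
  lb <= c * opt *+ #|J|.
Proof.
move=> c0 lb0 [d [T [P [alg [online [meas approx]]]]]] valid opt_ge lower.
have meas_cong j : measurable_fun setT (fun w => (congestion (inst j) (alg w (inst j)))%:E).
  exact: (measurable_fun_countable_fibers (g := fun w => alg w (inst j))
    (fun s => (congestion (inst j) s)%:E) (meas (inst j))).
rewrite -lee_fin.
apply: (@le_trans _ _ (\sum_j \int[P]_w (congestion (inst j) (alg w (inst j)))%:E)%E).
  rewrite -ge0_integral_sum //; last by move=> j w _; rewrite lee_fin congestion_ge0.
  rewrite -[lb%:E]mule1 -(probability_setT P) -integral_cst //.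
  apply: ge0_le_integral => //; first exact: emeasurable_sum.
  by move=> w _; rewrite sumEFin lee_fin; apply: lower.
rewrite -sumr_const -sumEFin; apply: lee_sum => j _; apply: le_trans (approx _ (valid j)) _.
by rewrite EFinM lee_wpmul2l ?lee_fin.
Qed.

End Yao.

Lemma ratio_ge_two_sub_inv_pow2 (F : realFieldType) (c dl : F) S : 0 < dl ->
  dl *+ (2 ^ S).*2.-1 <= c * dl *+ 2 ^ S -> 2 - ((2 ^ S)%:R)^-1 <= c.
Proof.
move=> dl_gt0; set K : F := (2 ^ S)%:R; have K_gt0 : 0 < K by rewrite ltr0n expn_gt0.
have -> : dl *+ (2 ^ S).*2.-1 = dl * (K * 2 - 1).
  by rewrite -[LHS]mulr_natr -subn1 natrB ?double_gt0 ?expn_gt0 // -muln2 natrM.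
rewrite -mulr_natr -/K => bound.
rewrite lerBlDr -(ler_pM2r K_gt0) mulrDl mulVf ?gt_eqF //.
nra.
Qed.

Theorem mainTheorem7 (Rt : realType) (N R : nat) :
  (2 <= N)%N -> (3 <= R)%N ->
  forall c : Rt, c < 2 - ((2 ^ (R %/ 3))%:R)^-1 ->
  ~ @rand_c_approx Rt N R c.
Proof.
move=> N_ge2 R_ge3 c lt_c /rand_c_approx_max approx.
set S := (R %/ 3)%N in lt_c; have S_gt0 : (0 < S)%N by rewrite divn_gt0.
have S_le : (3 * S <= R)%N by rewrite mulnC leq_trunc_div.
have i0 : 'I_R by exists 0%N; lia.
have m0 : 'I_N by exists 0%N; lia.
pose M := (N.+1.*2 * S)%N; pose dl : Rt := M%:R^-1.
have dl_gt0 : 0 < dl by rewrite invr_gt0 ltr0n muln_gt0 S_gt0.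
have c'_ge0 : 0 <= Num.max c 0 by rewrite le_max lexx orbT.
have dlM : dl *+ M = 1 by rewrite -mulr_natr mulVf // pnatr_eq0 -lt0n muln_gt0 S_gt0.
have := yao_principle (inst := fun bs : S.-tuple bool => instance i0 m0 dl 0 bs)
  c'_ge0 (mulrn_wge0 _ (ltW dl_gt0)) approx
  (fun bs => valid_instance i0 m0 0 (bs := bs) dl_gt0 ltac:(by rewrite size_tuple dlM))
  (fun bs => OPT_instance_le i0 m0 (bs := bs) (ltW dl_gt0) ltac:(by rewrite size_tuple) N_ge2)
  (fun A online => sum_congestion_instances_ge i0 m0 online (ltW dl_gt0) S_gt0).
rewrite card_tuple card_bool => /(ratio_ge_two_sub_inv_pow2 dl_gt0).
have inv_le1 : ((2 ^ S)%:R : Rt)^-1 <= 1 by rewrite invf_le1 ?ltr0n ?expn_gt0 // ler1n expn_gt0.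
by rewrite le_max leNgt lt_c /= leNgt subr_gt0 (le_lt_trans inv_le1) ?ltr1n.
Qed.
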